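(* Let $f(x)\in\mathbb{Q}[x,x^{-1}]$ be a non-zero Laurent polynomial which is odd, i.e. $f(-x)=-f(x)$. Then $f$ satisfies WP: there exists a positive integer $N$ such that every rational number is of the form $f(a_1)+\cdots+f(a_N)$ with $a_1,\dots,a_N\in\mathbb{Q}^*$.
   Context: A rational function $f\in\mathbb{Q}(x)$ satisfies WP if for some $N\ge1$ every rational number is a sum of $N$ elements of $f(\mathbb{Q})$, the set of values of $f$ at rational non-poles. *)

From HB Require Import structures.
From mathcomp Require Import all_boot all_order all_algebra.
Set Implicit Arguments. Unset Strict Implicit. Unset Printing Implicit Defensive.
Import Order.TTheory GRing.Theory Num.Theory.
Local Open Scope ring_scope.

(* A Laurent polynomial f in Q[x, x^-1] is represented as f(x) = p(x) / x^m
   with p : {poly rat} and m : nat (every Laurent polynomial has this form). *)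
Definition laurent_eval (p : {poly rat}) (m : nat) (x : rat) : rat :=
  p.[x] / x ^+ m.

(* f is odd: f(-x) = -f(x) (as functions on Q^*; equivalent to the formal
   identity since Q^* is infinite). *)
Definition laurent_odd (p : {poly rat}) (m : nat) : Prop :=
  forall x : rat, x != 0 -> laurent_eval p m (- x) = - laurent_eval p m x.

From HB Require Import structures.
From mathcomp Require Import all_boot all_order all_algebra.
From mathcomp Require Import ring lra.
Import Order.TTheory GRing.Theory Num.Theory.
Set Implicit Arguments. Unset Strict Implicit. Unset Printing Implicit Defensive.
Local Open Scope ring_scope.

(* Call g representable if, outside a finite set, g(t) is a sum of K values
   of f at nonzero points, K fixed.  This is stable under sums, integer
   multiples, changes of variable and, f being odd, negation.  Hence the operator g(t) |-> 2^m g(2t) - 2^k g(t) preserves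
   representability, and on f(t) = sum_i c_i t^(i-m) it multiplies c_i by
   2^i - 2^k.  Applying it for every k but one isolated k0 with c_k0 != 0 and
   k0 != m (such a k0 exists because a nonzero odd function is not constant)
   leaves a representable monomial A t^(k0-m).  After t |-> 1/t if needed and
   t |-> t + 1, the same isolation extracts a representable linear function
   s t, and q = s t1 + s (q/s - t1) for a t1 avoiding finitely many values. *)

Definition waring_property (R : nzRingType) (F : R -> R) :=
  exists N : nat, (0 < N)%N /\
    forall q : R, exists a : 'I_N -> R,
      (forall i, a i != 0) /\ q = \sum_(i < N) F (a i).

Definition laurent_sum (R : fieldType) (c : nat -> R) (n m : nat) (t : R) :=
  (\sum_(i < n) c i * t ^+ i) / t ^+ m.

Lemma not_in_seq (R : realDomainType) (s : seq R) : exists t, t \notin s.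
Proof.
suff lt_bound x : x \in s -> x < 1 + \sum_(y <- s) `|y|.
  by exists (1 + \sum_(y <- s) `|y|); apply/negP => /lt_bound; rewrite ltxx.
elim: s => [//|y s IHs] in x *; rewrite inE big_cons => /orP[/eqP->|xs].
  have := ler_norm y; have : 0 <= \sum_(z <- s) `|z| by apply: sumr_ge0.
  lra.
by have := IHs _ xs; have := normr_ge0 y; lra.
Qed.

Section Representable.

Variables (R : realFieldType) (F : R -> R).
Hypothesis F_odd : forall x, x != 0 -> F (- x) = - F x.

Definition sum_of_values (K : nat) (v : R) :=
  exists s : seq R, [/\ size s = K, all (fun x => x != 0) s & v = \sum_(x <- s) F x].

Definition representable (G : R -> R) :=
  exists K (B : seq R), forall t, t \notin B -> sum_of_values K (G t).

Lemma sum_of_valuesD K L v w :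
  sum_of_values K v -> sum_of_values L w -> sum_of_values (K + L) (v + w).
Proof.
move=> [s1 [<- s1_nz ->]] [s2 [<- s2_nz ->]]; exists (s1 ++ s2).
by rewrite size_cat all_cat s1_nz s2_nz big_cat.
Qed.

Lemma sum_of_valuesN K v : sum_of_values K v -> sum_of_values K (- v).
Proof.
move=> [s [<- s_nz ->]]; exists (map -%R s); rewrite size_map.
split=> //; first by rewrite all_map; apply/allP=> x xs /=; rewrite oppr_eq0 (allP s_nz).
rewrite big_map -sumrN !big_seq; apply: eq_bigr => x xs.
by rewrite F_odd // (allP s_nz).
Qed.

Lemma representable_id : representable F.
Proof.
exists 1%N, [:: 0] => t; rewrite inE => t_nz; exists [:: t].
by rewrite big_seq1 /= t_nz.
Qed.

Lemma representable0 : representable (fun=> 0).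
Proof. by exists 0%N, [::] => t _; exists [::]; rewrite big_nil. Qed.

Lemma eq_representable G H :
  (forall t, t != 0 -> G t = H t) -> representable G -> representable H.
Proof.
move=> eqGH [K [B repG]]; exists K, (0 :: B) => t.
by rewrite inE negb_or => /andP[t_nz tB]; rewrite -eqGH //; apply: repG.
Qed.

Lemma representableD G H :
  representable G -> representable H -> representable (fun t => G t + H t).
Proof.
move=> [K [B repG]] [L [C repH]]; exists (K + L)%N, (B ++ C) => t.
by rewrite mem_cat negb_or => /andP[tB tC]; apply: sum_of_valuesD; auto.
Qed.

Lemma representableN G : representable G -> representable (fun t => - G t).
Proof. by move=> [K [B repG]]; exists K, B => t tB; apply/sum_of_valuesN/repG. Qed.

Lemma representableB G H :
  representable G -> representable H -> representable (fun t => G t - H t).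
Proof. by move=> repG repH; apply/representableD/representableN. Qed.

Lemma representableMn G n : representable G -> representable (fun t => G t *+ n).
Proof.
move=> repG; elim: n => [|n IHn].
  by apply: (eq_representable _ representable0) => t _; rewrite mulr0n.
by apply: (eq_representable _ (representableD repG IHn)) => t _; rewrite mulrS.
Qed.

Lemma representable_comp G phi psi :
  cancel phi psi -> representable G -> representable (G \o phi).
Proof.
move=> phiK [K [B repG]]; exists K, (map psi B) => t tB; apply: repG.
by apply: contra tB => phi_tB; rewrite -[t]phiK map_f.
Qed.

Lemma laurent_sum_difference (c : nat -> R) n m k t : t != 0 ->
  laurent_sum c n m (2 * t) *+ 2 ^ m - laurent_sum c n m t *+ 2 ^ k =
  laurent_sum (fun i => c i * (2 ^+ i - 2 ^+ k)) n m t.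
Proof.
move=> t_nz; rewrite /laurent_sum.
have -> : \sum_(i < n) c i * (2 ^+ i - 2 ^+ k) * t ^+ i =
    \sum_(i < n) c i * (2 * t) ^+ i - 2 ^+ k * \sum_(i < n) c i * t ^+ i.
  by rewrite mulr_sumr -sumrB; apply: eq_bigr => i _; rewrite exprMn; ring.
rewrite -[_ *+ 2 ^ m]mulr_natr -[_ *+ 2 ^ k]mulr_natr !natrX exprMn; field.
by rewrite !expf_neq0 ?pnatr_eq0.
Qed.

Lemma representable_laurent_difference (c : nat -> R) n m k :
  representable (laurent_sum c n m) ->
  representable (laurent_sum (fun i => c i * (2 ^+ i - 2 ^+ k)) n m).
Proof.
move=> repG.
have rep2G : representable (laurent_sum c n m \o *%R 2).
  by apply: representable_comp (mulKf _) repG; rewrite pnatr_eq0.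
apply: eq_representable (laurent_sum_difference c n m k) _.
exact: representableB (representableMn _ rep2G) (representableMn _ repG).
Qed.

Lemma representable_laurent_differences (c : nat -> R) n m ks :
  representable (laurent_sum c n m) ->
  representable (laurent_sum (fun i => c i * \prod_(k <- ks) (2 ^+ i - 2 ^+ k)) n m).
Proof.
move=> repG; elim: ks => [|k ks IHks].
  apply: (eq_representable _ repG) => t _; rewrite /laurent_sum; congr (_ / _).
  by apply: eq_bigr => i _; rewrite big_nil mulr1.
apply: (eq_representable _ (representable_laurent_difference k IHks)) => t _.
rewrite /laurent_sum; congr (_ / _); apply: eq_bigr => i _; rewrite big_cons; ring.
Qed.

Lemma representable_laurent_coef (c : nat -> R) n m k0 : (k0 < n)%N -> c k0 != 0 ->
  representable (laurent_sum c n m) ->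
  exists2 A, A != 0 & representable (fun t => A * t ^+ k0 / t ^+ m).
Proof.
move=> k0_lt ck0_nz repG; set ks := [seq k <- iota 0 n | k != k0].
exists (c k0 * \prod_(k <- ks) (2 ^+ k0 - 2 ^+ k)).
  rewrite mulf_neq0 // prodf_seq_neq0; apply/allP => k.
  rewrite mem_filter => /andP[k_neq _] /=.
  by rewrite subr_eq0 -!natrX eqr_nat eqn_exp2l // eq_sym.
apply: (eq_representable _ (representable_laurent_differences ks repG)) => t _.
rewrite /laurent_sum (bigD1 (Ordinal k0_lt)) //= [X in _ + X]big1 ?addr0 // => i i_neq.
have i_ks : (i : nat) \in ks.
  rewrite mem_filter mem_iota add0n ltn_ord leq0n !andbT.
  by apply: contra_neq i_neq => i_eq; apply: val_inj.
by rewrite (big_rem _ i_ks) /= subrr mul0r mulr0 mul0r.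
Qed.

Lemma representable_monomial_pos (A : R) a b : a != b ->
  representable (fun t => A * t ^+ a / t ^+ b) ->
  exists2 d, (0 < d)%N & representable (fun t => A * t ^+ d).
Proof.
move=> a_neq_b repG; case: (ltngtP a b) a_neq_b => // [a_lt_b | b_lt_a] _.
  exists (b - a)%N; first by rewrite subn_gt0.
  apply: (eq_representable _ (representable_comp invrK repG)) => t t_nz /=.
  rewrite !exprVn -[in t ^- b](subnK (ltnW a_lt_b)) exprD; field.
  by rewrite !expf_neq0.
exists (a - b)%N; first by rewrite subn_gt0.
apply: (eq_representable _ repG) => t t_nz.
by rewrite -{1}(subnK (ltnW b_lt_a)) exprD mulrA mulfK // expf_neq0.
Qed.

Lemma representable_linear (A : R) d : A != 0 -> (0 < d)%N ->
  representable (fun t => A * t ^+ d) ->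
  exists2 s, s != 0 & representable (fun t => s * t).
Proof.
move=> A_nz d_gt0 repG.
have repG1 : representable (laurent_sum (fun i => A * 'C(d, i)%:R) d.+1 0).
  apply: (eq_representable _ (representable_comp (addrK 1) repG)) => t _ /=.
  rewrite /laurent_sum expr0 divr1 exprD1n mulr_sumr.
  by apply: eq_bigr => i _; rewrite -mulr_natr; ring.
have lin_coef_nz : A * 'C(d, 1)%:R != 0 by rewrite mulf_neq0 // bin1 pnatr_eq0 -lt0n.
have [s s_nz reps] := representable_laurent_coef (k0 := 1) (n := d.+1) d_gt0 lin_coef_nz repG1.
by exists s => //; apply: (eq_representable _ reps) => t _; rewrite expr1 expr0 divr1.
Qed.

Lemma waring_property_linear (s : R) : s != 0 ->
  representable (fun t => s * t) -> waring_property F.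
Proof.
move=> s_nz [K [B repG]]; exists (K + K + 2)%N; split; first by rewrite addn2.
move=> q; have [t1] := not_in_seq (B ++ [seq q / s - b | b <- B]).
rewrite mem_cat negb_or => /andP[t1B t1B'].
have t2B : q / s - t1 \notin B.
  by apply: contra t1B' => t2B; apply/mapP; exists (q / s - t1) => //; ring.
(* Padding by F 1 + F (-1) = 0 keeps N positive even when K = 0. *)
have sum0 : sum_of_values 2 0.
  exists [:: 1; -1]; split; first by [].
    by rewrite /= oppr_eq0 oner_eq0.
  by rewrite big_cons big_seq1 F_odd ?oner_eq0 // subrr.
have := sum_of_valuesD (sum_of_valuesD (repG _ t1B) (repG _ t2B)) sum0.
have -> : s * t1 + s * (q / s - t1) + 0 = q by field.
move=> [l [l_size l_nz ->]]; exists (nth 1 l); split.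
  by move=> i; apply: (allP l_nz); rewrite mem_nth // l_size.
by rewrite (big_nth 1) l_size big_mkord.
Qed.

End Representable.

Lemma odd_laurent_coef (R : realFieldType) (p : {poly R}) (m : nat) :
  p != 0 -> (forall x, x != 0 -> p.[- x] / (- x) ^+ m = - (p.[x] / x ^+ m)) ->
  exists k, [/\ (k < size p)%N, p`_k != 0 & k != m].
Proof.
move=> p_nz p_odd.
have [/existsP[k /andP[pk_nz k_neq]] | /existsPn no_k] :=
  boolP [exists k : 'I_(size p), (p`_k != 0) && (val k != m)].
  by exists k.
have pE : p = (p`_m)%:P * 'X^m.
  apply/polyP => i; rewrite coefCM coefXn.
  have [->|i_neq] := eqVneq i m; first by rewrite mulr1.
  rewrite mulr0; have [i_lt|i_ge] := ltnP i (size p); last exact: nth_default.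
  by apply/eqP; have := no_k (Ordinal i_lt); rewrite /= i_neq andbT negbK.
have pm_eq x : x != 0 -> p.[x] / x ^+ m = p`_m.
  by move=> x_nz; rewrite {1}pE hornerCM hornerXn mulfK // expf_neq0.
have := p_odd 1 (oner_neq0 _); rewrite !pm_eq ?oppr_eq0 ?oner_eq0 // => /eqP.
rewrite -subr_eq0 opprK -mulr2n mulrn_eq0 /= => /eqP pm0.
by move: p_nz; rewrite pE pm0 mul0r eqxx.
Qed.

Theorem corollary3p5 (p : {poly rat}) (m : nat) :
  p != 0 -> laurent_odd p m ->
  exists N : nat, (0 < N)%N /\
    forall q : rat, exists a : 'I_N -> rat,
      (forall i, a i != 0) /\ q = \sum_(i < N) laurent_eval p m (a i).
Proof.
move=> p_nz p_odd.
have [k0 [k0_lt pk0_nz k0_neq]] := odd_laurent_coef p_nz p_odd.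
have rep_p : representable (laurent_eval p m) (laurent_sum (fun i => p`_i) (size p) m).
  by apply: (eq_representable _ (representable_id _)) => t _; rewrite /laurent_eval horner_coef.
have [A A_nz repA] := representable_laurent_coef p_odd k0_lt pk0_nz rep_p.
have [d d_gt0 repAd] := representable_monomial_pos k0_neq repA.
have [s s_nz reps] := representable_linear p_odd A_nz d_gt0 repAd.
exact (waring_property_linear p_odd s_nz reps).
Qed.
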